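(* Let $\mathcal{C}$ be a near MDS (NMDS) linear code over $\mathbb{F}_q$ with parameters $[n,k,n-k]$. If $\min\{k,n-k\}\ge 3$ and the supports of the minimum-weight codewords of $\mathcal{C}$ form a $2$-design (i.e. $(\mathcal{P}(\mathcal{C}),\mathcal{H}_{n-k}(\mathcal{C}))$ is a $2$-design), then $(\mathcal{P}(\mathcal{C}),\mathcal{H}_w(\mathcal{C}))$ and $(\mathcal{P}(\mathcal{C}^\perp),\mathcal{H}_w(\mathcal{C}^\perp))$ are $2$-designs for every $w$ with $2\le w\le n$.
   Context: An $[n,k,d]$ linear code is a $k$-dimensional subspace of $\mathbb{F}_q^n$ with minimum Hamming distance $d$; $\mathcal{C}^\perp$ is its dual with respect to the standard inner product. A code is AMDS (almost MDS) if it has parameters $[n,k,n-k]$, and NMDS if both $\mathcal{C}$ and $\mathcal{C}^\perp$ are AMDS (so $\mathcal{C}^\perp$ has parameters $[n,n-k,k]$). For a code $\mathcal{C}$ of length $n$, $\mathcal{P}(\mathcal{C})=\{1,\dots,n\}$ is the set of coordinate positions, and $\mathcal{H}_w(\mathcal{C})$ is the multiset $\{\{\operatorname{supp}(\mathbf c):\mathbf c\in\mathcal{C},\ \operatorname{wt}(\mathbf c)=w\}\}$ with every multiplicity divided by $q-1$. A $t$-$(n,w,\lambda)$ design is a pair (point set of size $n$, multiset of $w$-subsets called blocks) such that every $t$-subset of points lies in exactly $\lambda$ blocks; an empty block family counts as a (trivial) design. *)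

From mathcomp Require Import all_boot all_order all_algebra all_field.
Set Implicit Arguments. Unset Strict Implicit. Unset Printing Implicit Defensive.
Import GRing.Theory.
Local Open Scope ring_scope.

Section Codes.
Variable F : finFieldType.

Definition codewords m n (C : 'M[F]_(m, n)) : {set 'rV[F]_n} :=
  [set v : 'rV[F]_n | (v <= C)%MS].

(* dual code: row space of kermx C^T = { v | v *m C^T = 0 } *)
Definition dual_code m n (C : 'M[F]_(m, n)) : 'M[F]_n := kermx C^T.

Definition supp n (v : 'rV[F]_n) : {set 'I_n} := [set i | v 0 i != 0].
Definition wt n (v : 'rV[F]_n) : nat := #|supp v|.

Definition min_dist m n (C : 'M[F]_(m, n)) (d : nat) : Prop :=
  (exists2 v, v \in codewords C & (v != 0) && (wt v == d)) /\
  (forall v, v \in codewords C -> v != 0 -> (d <= wt v)%N).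

Definition AMDS m n (C : 'M[F]_(m, n)) : Prop := min_dist C (n - \rank C).

Definition NMDS m n (C : 'M[F]_(m, n)) : Prop := AMDS C /\ AMDS (dual_code C).

(* number of blocks of H_w(C) containing T: codewords of weight w whose
   support contains T, counted with multiplicity divided by q - 1 *)
Definition blocks_through m n (C : 'M[F]_(m, n)) (w : nat) (T : {set 'I_n}) : nat :=
  (#|[set v in codewords C | (wt v == w) && (T \subset supp v)]| %/ (#|F|.-1))%N.

Definition is_2design m n (C : 'M[F]_(m, n)) (w : nat) : Prop :=
  exists lam : nat, forall T : {set 'I_n}, #|T| = 2%N -> blocks_through C w T = lam.

End Codes.

(* Let [A] be a code of dimension [r] whose nonzero codewords have weight at
   least [d = n - r] and whose dual has minimum weight at least [r].  The
   identity  dim (A ∩ F^(~S)) + |S| = dim A + dim (A^⊥ ∩ F^S)  shows that the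
   subcode supported in a set [V] has dimension [|V| - d] when [|V| <> d]; when
   [|V| = d] it is a line or zero according as [V] is a minimum support or not.
   Hence [A] has exactly [q^(|V| - d) + (q - 1) [V is a minimum support]]
   codewords supported in [V].
   If the minimum supports form a 2-design, the number of them avoiding a set
   [S] with [|S| <= 2] only depends on [|S|].  Summing the count above over the
   t-subsets of the complement of [S] and inverting this transform, which is
   unitriangular in the weight, the weight distribution of the codewords
   vanishing on [S] only depends on [|S|].  Inclusion-exclusion over the
   subsets of a pair then shows that the number of weight-[w] codewords whose
   support contains the pair is the same for all pairs.
   The minimum supports of the dual code are the complements of those of the
   code, so they form a 2-design as well and the argument applies again. *)

From mathcomp Require Import all_boot all_order all_algebra all_field.
From mathcomp Require Import zify.
Set Implicit Arguments. Unset Strict Implicit. Unset Printing Implicit Defensive.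
Import GRing.Theory.

Section Counting.
Variable T : finType.
Implicit Types (P b p r : pred T) (X R W : {set T}).

Lemma sum_nat_pred_card P b : \sum_(x | P x) (b x : nat) = #|[set x | P x && b x]|.
Proof. by rewrite -sum1dep_card big_mkcondr; apply: eq_bigr => x _; case: (b x). Qed.

Lemma card_incl_excl2 X p r :
  #|[set x in X | p x && r x]| + #|X| =
  #|[set x in X | p x]| + #|[set x in X | r x]| + #|[set x in X | ~~ p x && ~~ r x]|.
Proof.
rewrite -!sum_nat_pred_card -[#|X|]sum1_card -!big_split /=.
by apply: eq_bigr => x _; case: (p x); case: (r x).
Qed.

Lemma subsetC1 X x : (X \subset [set~ x]) = (x \notin X).
Proof. by rewrite subsetC sub1set inE. Qed.

Definition nsupsets (N u t : nat) := if u <= t then 'C(N - u, t - u) else 0.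

Lemma card_supsets R W t : W \subset R ->
  #|[set V : {set T} | [&& V \subset R, #|V| == t & W \subset V]]| = nsupsets #|R| #|W| t.
Proof.
move=> sWR; rewrite /nsupsets; case: leqP => [leWt | ltWt]; last first.
  apply: eq_card0 => V; rewrite inE; apply/negbTE/and3P => -[_ /eqP cardV /subset_leq_card].
  by rewrite cardV leqNgt ltWt.
rewrite -(cardsDS sWR) -cards_draws -(card_in_imset (f := fun V => V :\: W)).
  congr #|pred_of_set _|; apply/setP => X; rewrite inE; apply/imsetP/andP.
    case=> V; rewrite inE => /and3P [sVR /eqP <- sWV] ->.
    by split; [exact: setSD | rewrite cardsDS].
  case=> sXRW /eqP cardX.
  have dXW : [disjoint X & W] by move: sXRW; rewrite subsetD => /andP [].
  exists (X :|: W); last by rewrite setDUl setDv setU0; apply/esym/setDidPl.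
  rewrite inE subsetUr subUset sWR (subset_trans sXRW) ?subsetDl //= andbT.
  by rewrite cardsU (disjoint_setI0 dXW) cards0 subn0 cardX subnK.
move=> V1 V2; rewrite !inE => /and3P [_ _ sWV1] /and3P [_ _ sWV2] eqD.
apply/setP => x; have := congr1 (fun V : {set T} => x \in V) eqD; rewrite /= !inE.
by case xW: (x \in W) => //=; rewrite (subsetP sWV1) ?(subsetP sWV2).
Qed.

Lemma ex_const_2subsets (f : {set T} -> nat) :
  (forall U U' : {set T}, #|U| = 2 -> #|U'| = 2 -> f U = f U') ->
  exists lam, forall U : {set T}, #|U| = 2 -> f U = lam.
Proof.
move=> f_const; case: (pickP (fun U : {set T} => #|U| == 2)) => [U0 /eqP U0_2 | no2].
  by exists (f U0) => U U_2; apply: f_const.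
by exists 0 => U U_2; move: (no2 U); rewrite U_2 eqxx.
Qed.

End Counting.

Section SupportFamilies.
Variables (T K : finType) (sp : K -> {set T}).
Implicit Types (D : {set K}) (R S V : {set T}).

Definition supported_in D V := [set v in D | sp v \subset V].

Definition nweight D w := #|[set v in D | #|sp v| == w]|.

Definition subset_sum D R t :=
  \sum_(V : {set T} | (V \subset R) && (#|V| == t)) #|supported_in D V|.

Lemma sum_by_weight D (f : nat -> nat) N : (forall u, N <= u -> f u = 0) ->
  \sum_(v in D) f #|sp v| = \sum_(u < N) nweight D u * f u.
Proof.
move=> f0; transitivity (\sum_(v in D) \sum_(u < N | u == #|sp v| :> nat) f u).
  by apply: eq_bigr => v _; rewrite big_ord1_eq; case: ltnP => // /f0.
rewrite (exchange_big_dep predT) //=; apply: eq_bigr => u _.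
by rewrite sum_nat_cond_const; congr (_ * _); apply: eq_card => v; rewrite !inE eq_sym.
Qed.

Lemma subset_sum_by_weight D R t : {in D, forall v, sp v \subset R} ->
  subset_sum D R t = \sum_(u < t.+1) nweight D u * nsupsets #|R| u t.
Proof.
move=> sDR; rewrite -(@sum_by_weight D (fun u => nsupsets #|R| u t) t.+1) => [|u]; last first.
  by rewrite /nsupsets ltnNge => /negbTE ->.
rewrite /subset_sum (eq_bigr (fun V => \sum_(v in D) (sp v \subset V : nat))); last first.
  by move=> V _; rewrite sum_nat_pred_card.
rewrite exchange_big; apply: eq_bigr => v Dv.
by rewrite sum_nat_pred_card -card_supsets ?sDR //; apply: eq_card => V; rewrite !inE andbA.
Qed.

Lemma eq_nweight_of_subset_sum D1 D2 R1 R2 : #|R1| = #|R2| ->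
    {in D1, forall v, sp v \subset R1} -> {in D2, forall v, sp v \subset R2} ->
    (forall t, subset_sum D1 R1 t = subset_sum D2 R2 t) ->
  forall w, nweight D1 w = nweight D2 w.
Proof.
move=> eqR sD1 sD2 eq_sum w; elim/ltn_ind: w => w IHw.
have := eq_sum w; rewrite !subset_sum_by_weight // !big_ord_recr /= -eqR.
rewrite /nsupsets leqnn subnn bin0 !muln1.
under eq_bigr => u _ do rewrite IHw //.
by move/addnI.
Qed.

Lemma nweight_incl_excl2 D w (i j : T) : i != j ->
  nweight (supported_in D (~: [set i; j])) w + nweight D w =
  nweight (supported_in D (~: [set i])) w
  + nweight (supported_in D (~: [set j])) w
  + #|[set v in D | (#|sp v| == w) && ([set i; j] \subset sp v)]|.
Proof.
move=> ij; have nweight_avoiding S : nweight (supported_in D (~: S)) w =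
    #|[set v in [set v in D | #|sp v| == w] | sp v \subset ~: S]|.
  by apply: eq_card => v; rewrite !inE andbAC.
rewrite !nweight_avoiding [nweight D w]/nweight.
set X := [set v in D | #|sp v| == w].
have -> : [set v in X | sp v \subset ~: [set i; j]] =
    [set v in X | (sp v \subset ~: [set i]) && (sp v \subset ~: [set j])].
  by apply/setP => v; rewrite !inE setCU subsetI.
have -> : #|[set v in D | (#|sp v| == w) && ([set i; j] \subset sp v)]| =
    #|[set v in X | ~~ (sp v \subset ~: [set i]) && ~~ (sp v \subset ~: [set j])]|.
  by apply: eq_card => v; rewrite !inE subUset !sub1set !subsetC1 !negbK andbA.
exact: card_incl_excl2.
Qed.

End SupportFamilies.

Definition nblocks_avoiding (T : finType) (M : {set {set T}}) (S : {set T}) :=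
  #|[set B in M | B \subset ~: S]|.

Section TwoDesigns.
Variables (T : finType) (M : {set {set T}}) (d lam : nat).
Hypothesis card_block : forall B, B \in M -> #|B| = d.
Hypothesis d_gt1 : 1 < d.
Hypothesis blocks_through2 :
  forall U : {set T}, #|U| = 2 -> #|[set B in M | U \subset B]| = lam.

Lemma replication_mul (i : T) : #|[set B in M | i \in B]| * d.-1 = #|T|.-1 * lam.
Proof.
transitivity (\sum_(B | (B \in M) && (i \in B)) \sum_j (j \in B :\ i : nat)).
  rewrite -sum_nat_cond_const; apply: eq_bigr => B /andP [MB iB].
  rewrite sum_nat_pred_card -(card_block MB) (cardsD1 i B) iB.
  by apply: eq_card => j; rewrite inE.
rewrite exchange_big (bigD1 i) //= big1 => [|B _]; last by rewrite !inE eqxx.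
rewrite add0n -(cardC1 i) -sum1_card big_distrl /=; apply: eq_big => // j ji.
rewrite mul1n sum_nat_pred_card -(blocks_through2 (U := [set i; j])).
  by apply: eq_card => B; rewrite !inE subUset !sub1set ji /= -andbA.
by rewrite cards2 eq_sym ji.
Qed.

Lemma replication_const (i i' : T) :
  #|[set B in M | i \in B]| = #|[set B in M | i' \in B]|.
Proof.
have d1_gt0 : 0 < d.-1 by rewrite -ltnS prednK // ltnW.
by apply/eqP; rewrite -(eqn_pmul2r d1_gt0) !replication_mul.
Qed.

Lemma nblocks_avoiding1 (i : T) :
  nblocks_avoiding M [set i] + #|[set B in M | i \in B]| = #|M|.
Proof.
rewrite -(cardsID [set B : {set T} | i \in B] M) addnC.
by congr (_ + _); apply: eq_card => B; rewrite !inE // subsetC1 andbC.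
Qed.

Lemma nblocks_avoiding2 (i j : T) : i != j ->
  lam + #|M| = #|[set B in M | i \in B]| + #|[set B in M | j \in B]|
               + nblocks_avoiding M [set i; j].
Proof.
move=> ij; rewrite -(blocks_through2 (U := [set i; j])) ?cards2 ?ij //.
have -> : nblocks_avoiding M [set i; j] =
    #|[set B in M | (i \notin B) && (j \notin B)]|.
  by apply: eq_card => B; rewrite !inE setCU subsetI !subsetC1.
rewrite -card_incl_excl2; congr (_ + _).
by apply: eq_card => B; rewrite !inE subUset !sub1set.
Qed.

Lemma nblocks_avoiding_eq (S S' : {set T}) : #|S| = #|S'| -> #|S| <= 2 ->
  nblocks_avoiding M S = nblocks_avoiding M S'.
Proof.
move=> eqS; rewrite leq_eqVlt ltnS leq_eqVlt ltnS leqn0 => /or3P[] /eqP cardS.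
- have /cards2P [i [j [ij ->]]] : #|S| == 2 by rewrite cardS.
  have /cards2P [i' [j' [ij' ->]]] : #|S'| == 2 by rewrite -eqS cardS.
  have := nblocks_avoiding2 ij; have := nblocks_avoiding2 ij'.
  rewrite (replication_const i' i) (replication_const j i) (replication_const j' i).
  lia.
- have /cards1P [i ->] : #|S| == 1 by rewrite cardS.
  have /cards1P [i' ->] : #|S'| == 1 by rewrite -eqS cardS.
  have := nblocks_avoiding1 i; have := nblocks_avoiding1 i'.
  rewrite (replication_const i' i); lia.
- by rewrite (cards0_eq cardS) (cards0_eq (etrans (esym eqS) cardS)).
Qed.

End TwoDesigns.

Section DesignTransfer.
Variables (T K : finType) (sp : K -> {set T}) (D : {set K}) (M : {set {set T}}).
Variables (d c lam : nat) (h : nat -> nat).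
Hypothesis card_supported_in :
  forall V, #|supported_in sp D V| = h #|V| + c * (V \in M).
Hypothesis card_block : forall B, B \in M -> #|B| = d.
Hypothesis d_gt1 : 1 < d.
Hypothesis blocks_through2 :
  forall U : {set T}, #|U| = 2 -> #|[set B in M | U \subset B]| = lam.

Lemma subset_sum_avoiding (S : {set T}) t :
  subset_sum sp (supported_in sp D (~: S)) (~: S) t =
  'C(#|~: S|, t) * h t + c * ((t == d) * nblocks_avoiding M S).
Proof.
rewrite /subset_sum (eq_bigr (fun V => h t + c * (V \in M))); last first.
  move=> V /andP [sVS /eqP <-]; rewrite -card_supported_in; apply: eq_card => v.
  rewrite !inE -andbA; case sv: (sp v \subset V); rewrite ?andbF //.
  by rewrite (subset_trans sv sVS).
rewrite big_split /= -big_distrr /= sum_nat_pred_card sum_nat_cond_const cards_draws.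
congr (_ + c * _); have [->|ntd] := eqVneq t d.
  rewrite mul1n; apply: eq_card => B; rewrite !inE.
  by case MB: (B \in M); rewrite ?andbF ?andbT // card_block // eqxx andbT.
rewrite mul0n; apply: eq_card0 => B; rewrite !inE.
by case MB: (B \in M); rewrite ?andbF // card_block // eq_sym (negbTE ntd) andbF.
Qed.

Lemma nweight_avoiding_eq (S S' : {set T}) : #|S| = #|S'| -> #|S| <= 2 -> forall w,
  nweight sp (supported_in sp D (~: S)) w = nweight sp (supported_in sp D (~: S')) w.
Proof.
move=> eqS leS2; have eqSC : #|~: S| = #|~: S'|.
  by have := cardsC S; have := cardsC S'; lia.
apply: (eq_nweight_of_subset_sum eqSC) => [v|v|t]; try by rewrite inE => /andP [].
rewrite !subset_sum_avoiding eqSC.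
by rewrite (nblocks_avoiding_eq card_block d_gt1 blocks_through2 eqS leS2).
Qed.

Lemma card_weight_through2_eq w (U U' : {set T}) : #|U| = 2 -> #|U'| = 2 ->
  #|[set v in D | (#|sp v| == w) && (U \subset sp v)]| =
  #|[set v in D | (#|sp v| == w) && (U' \subset sp v)]|.
Proof.
move=> /eqP/cards2P [i [j [ij ->]]] /eqP/cards2P [i' [j' [ij' ->]]].
have avoid1 (x y : T) : nweight sp (supported_in sp D (~: [set x])) w =
    nweight sp (supported_in sp D (~: [set y])) w.
  by apply: nweight_avoiding_eq; rewrite ?cards1.
have avoid2 : nweight sp (supported_in sp D (~: [set i'; j'])) w =
    nweight sp (supported_in sp D (~: [set i; j])) w.
  by apply: nweight_avoiding_eq; rewrite !cards2 ?ij ?ij'.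
have := nweight_incl_excl2 sp D w ij; have := nweight_incl_excl2 sp D w ij'.
rewrite (avoid1 i' i) (avoid1 j' j) avoid2; lia.
Qed.

End DesignTransfer.

Section LinearCodes.
Variable F : finFieldType.
Local Notation q := #|F|.
Local Open Scope ring_scope.

Lemma card_codewords m n (A : 'M[F]_(m, n)) : #|codewords A| = (q ^ \rank A)%N.
Proof.
have -> : codewords A = [set x *m row_base A | x : 'rV[F]_(\rank A)].
  apply/setP => v; rewrite inE; apply/idP/imsetP => [|[x _ ->]].
    by rewrite -(eq_row_base A) => /submxP [x ->]; exists x.
  by apply: submx_trans (submxMl _ _) _; rewrite (eq_row_base A).
by rewrite card_imset ?card_mx ?mul1n //; apply/row_free_inj/row_base_free.
Qed.

Definition coord_mx n (X : {set 'I_n}) : 'M[F]_n := diag_mx (\row_i (i \in X)%:R).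

Lemma sub_coord_mx n (X : {set 'I_n}) (v : 'rV[F]_n) :
  (v <= coord_mx X)%MS = (supp v \subset X).
Proof.
apply/idP/subsetP => [/submxP [u ->] i | sX].
  by rewrite inE mul_mx_diag !mxE; case: (i \in X); rewrite ?mulr0 ?eqxx.
have -> : v = v *m coord_mx X.
  apply/rowP => i; rewrite mul_mx_diag !mxE; case: (boolP (i \in X)) => Xi.
    by rewrite mulr1.
  by rewrite mulr0; apply/eqP; apply: contraR Xi => nz_vi; apply: sX; rewrite inE.
exact: submxMl.
Qed.

Lemma card_supp_subset n (X : {set 'I_n}) :
  #|[set v : 'rV[F]_n | supp v \subset X]| = (q ^ #|X|)%N.
Proof.
have row_inj : injective (fun f : {ffun 'I_n -> F} => \row_i f i).
  by move=> f g /rowP eq_fg; apply/ffunP => i; have := eq_fg i; rewrite !mxE.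
rewrite -(card_pffun_on (0 : F) X predT) -(card_imset _ row_inj); congr #|pred_of_set _|.
apply/setP => v; rewrite inE; apply/idP/imsetP => [sX | [f /pffun_onP [sf _] ->]].
  exists [ffun i => v 0 i]; last by apply/rowP => i; rewrite !mxE ffunE.
  apply/pffun_onP; split => //; apply/subsetP => i; rewrite inE ffunE => nz_vi.
  by apply: (subsetP sX); rewrite inE.
by apply/subsetP => i; rewrite inE mxE => nz_fi; apply: (subsetP sf); rewrite inE.
Qed.

Lemma rank_coord_mx n (X : {set 'I_n}) : \rank (coord_mx X) = #|X|.
Proof.
apply: (expnI (card_finNzRing_gt1 F)); rewrite -card_codewords -card_supp_subset.
by apply: eq_card => v; rewrite !inE sub_coord_mx.
Qed.

Definition subcode m n (A : 'M[F]_(m, n)) (X : {set 'I_n}) : 'M[F]_n :=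
  (A :&: coord_mx X)%MS.

Lemma sub_subcode m n (A : 'M[F]_(m, n)) X (v : 'rV[F]_n) :
  (v <= subcode A X)%MS = (v <= A)%MS && (supp v \subset X).
Proof. by rewrite sub_capmx sub_coord_mx. Qed.

Lemma codewords_subcode m n (A : 'M[F]_(m, n)) X :
  codewords (subcode A X) = supported_in (@supp F n) (codewords A) X.
Proof. by apply/setP => v; rewrite !inE sub_subcode. Qed.

Lemma mul_coord_mx_eq0 n (X : {set 'I_n}) (v : 'rV[F]_n) :
  (v *m coord_mx X == 0) = (supp v \subset ~: X).
Proof.
apply/eqP/subsetP => [vX0 i | sX]; last first.
  apply/rowP => i; rewrite mul_mx_diag !mxE; case: (boolP (i \in X)) => Xi.
    by apply/eqP; rewrite mulr1; apply: contraLR Xi => nz_vi; rewrite -in_setC sX ?inE.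
  by rewrite mulr0.
rewrite !inE; apply: contraNN => Xi; move/rowP/(_ i): vX0.
by rewrite mul_mx_diag !mxE Xi mulr1 => ->.
Qed.

Lemma dual_subcode_eqmx m n (A : 'M[F]_(m, n)) S :
  (subcode (dual_code A) S :=: kermx (col_mx A (coord_mx (~: S)))^T)%MS.
Proof.
apply/eqmxP/rV_eqP => v; rewrite sub_subcode /dual_code !sub_kermx.
by rewrite tr_col_mx mul_mx_row row_mx_eq0 tr_diag_mx mul_coord_mx_eq0 setCK.
Qed.

Lemma rank_subcode_dual m n (A : 'M[F]_(m, n)) S :
  (\rank (subcode A (~: S)) + #|S| = \rank A + \rank (subcode (dual_code A) S))%N.
Proof.
have := mxrank_sum_cap A (coord_mx (~: S)).
rewrite (dual_subcode_eqmx A S) mxrank_ker mxrank_tr addsmxE rank_coord_mx.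
have := rank_leq_col (col_mx A (coord_mx (~: S))); have := cardsC S; rewrite card_ord.
rewrite /subcode; move: (\rank (col_mx _ _)) (\rank (_ :&: _)) (\rank A) #|S| #|~: S|.
lia.
Qed.

Lemma supp0 n : supp (0 : 'rV[F]_n) = set0.
Proof. by apply/setP => i; rewrite !inE mxE eqxx. Qed.

Lemma rank_subcodeS m n (A : 'M[F]_(m, n)) (W V : {set 'I_n}) :
  W \subset V -> (\rank (subcode A V) <= \rank (subcode A W) + (#|V| - #|W|))%N.
Proof.
move=> sWV; have := mxrank_sum_cap (subcode A V) (coord_mx W).
have capW : (subcode A V :&: coord_mx W :=: subcode A W)%MS.
  apply/eqmxP/rV_eqP => v; rewrite sub_capmx !sub_subcode sub_coord_mx -andbA.
  by case: (boolP (supp v \subset W)) => sW; rewrite ?andbF // (subset_trans sW sWV).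
have le_sum : (\rank (subcode A V + coord_mx W)%MS <= #|V|)%N.
  rewrite -(rank_coord_mx V) mxrankS // addsmx_sub capmxSr /=.
  by apply/rV_subP => v; rewrite !sub_coord_mx => /subset_trans; apply.
rewrite capW rank_coord_mx; move: le_sum (subset_leq_card sWV).
move: (\rank (_ + _)%MS) (\rank (subcode A V)) (\rank (subcode A W)) #|V| #|W|.
lia.
Qed.

End LinearCodes.

Definition min_supports (F : finFieldType) m n (A : 'M[F]_(m, n)) d :=
  (@supp F n) @: [set v in codewords A | wt v == d].

Section MinimumWeight.
Variables (F : finFieldType) (m n : nat) (A : 'M[F]_(m, n)) (d : nat).
Local Notation q := #|F|.
Hypothesis d_gt0 : 0 < d.
Hypothesis wt_min : forall v, v \in codewords A -> v != 0%R -> d <= wt v.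
Implicit Types (V : {set 'I_n}) (v : 'rV[F]_n).

Lemma card_min_support V : V \in min_supports A d -> #|V| = d.
Proof. by case/imsetP => v; rewrite inE => /andP [_ /eqP <-] ->. Qed.

Lemma supp_eq_of_card V (v : 'rV[F]_n) : (v <= subcode A V)%MS -> v != 0%R ->
  #|V| = d -> supp v = V.
Proof.
rewrite sub_subcode => /andP [Av sV] nz_v cardV; apply/eqP.
by rewrite eqEcard sV cardV wt_min ?inE.
Qed.

Lemma rank_subcode_small V : #|V| < d -> \rank (subcode A V) = 0.
Proof.
move=> ltVd; apply/eqP; rewrite mxrank_eq0; apply/rowV0P => v.
rewrite sub_subcode => /andP [Av sV]; apply/eqP; apply: contraTT ltVd => nz_v.
by rewrite -leqNgt (leq_trans (wt_min _ nz_v)) ?inE // subset_leq_card.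
Qed.

Lemma rank_subcode_min V : #|V| = d -> \rank (subcode A V) = (V \in min_supports A d).
Proof.
move=> cardV; case: (boolP (V \in _)) => [/imsetP [v0] | notMV]; last first.
  apply/eqP; rewrite mxrank_eq0; apply/rowV0P => v sv; apply/eqP.
  apply: contraNT notMV => nz_v; apply/imsetP; exists v => //.
    by rewrite inE /wt (supp_eq_of_card sv) // cardV eqxx andbT inE (submx_trans sv) ?capmxSl.
  by rewrite (supp_eq_of_card sv).
rewrite !inE => /andP [Av0 _] V_v0; apply/eqP; rewrite eqn_leq; apply/andP; split.
  have [i Vi] : exists i, i \in V by apply/card_gt0P; rewrite cardV.
  have := cardsD1 i V; rewrite Vi /= => cardVi.
  have := rank_subcodeS A (subD1set V i).
  rewrite (rank_subcode_small (V := V :\ i)) ?cardVi ?addnK //.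
  by rewrite -cardV cardVi.
rewrite lt0n mxrank_eq0; apply/negP => /eqP subcode0.
have : (v0 <= subcode A V)%MS by rewrite sub_subcode Av0 V_v0 subxx.
rewrite subcode0 submx0 => /eqP v00; move: d_gt0.
by rewrite -cardV V_v0 v00 supp0 cards0.
Qed.

Lemma card_codewords_with_supp V : V \in min_supports A d ->
  #|[set v in codewords A | supp v == V]| = q.-1.
Proof.
move=> MV; have cardV := card_min_support MV.
have := card_codewords (subcode A V); rewrite rank_subcode_min // MV expn1.
have -> : codewords (subcode A V) = 0%R |: [set v in codewords A | supp v == V].
  apply/setP => v; rewrite !inE; have [-> | nz_v] /= := eqVneq v 0%R; first exact: sub0mx.
  apply/idP/andP => [sv | [Av /eqP <-]]; last by rewrite sub_subcode Av subxx.
  by rewrite (supp_eq_of_card sv) // (submx_trans sv) ?capmxSl.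
by rewrite cardsU1 !inE supp0 eq_sym -cards_eq0 cardV (gtn_eqF d_gt0) andbF add1n => <-.
Qed.

Lemma blocks_through_min_supports (T : {set 'I_n}) :
  blocks_through A d T = #|[set V in min_supports A d | T \subset V]|.
Proof.
have q1_gt0 : 0 < q.-1 by rewrite -subn1 subn_gt0 card_finNzRing_gt1.
rewrite /blocks_through; set X := [set v in codewords A | _].
suff -> : #|X| = q.-1 * #|[set V in min_supports A d | T \subset V]| by rewrite mulKn.
rewrite -sum1_card (partition_big_imset (@supp F n)) /=.
have -> : (@supp F n) @: X = [set V in min_supports A d | T \subset V].
  apply/setP => V; rewrite inE; apply/imsetP/andP => [[v] | [/imsetP [v]]].
    rewrite inE => /andP [Av /andP [wt_v sT]] ->; split => //.
    by apply/imsetP; exists v; rewrite // inE Av wt_v.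
  rewrite inE => /andP [Av wt_v] -> sT; exists v => //.
  by rewrite inE Av wt_v sT.
rewrite mulnC -sum_nat_const; apply: eq_bigr => V; rewrite inE => /andP [MV sTV].
rewrite sum1_card -(card_codewords_with_supp MV); apply: eq_card => v.
rewrite unfold_in /= !inE; case: (eqVneq (supp v) V) => [suppV | _]; last by rewrite !andbF.
by rewrite /wt suppV (card_min_support MV) sTV eqxx !andbT.
Qed.

End MinimumWeight.

Section CodeDesigns.
Variables (F : finFieldType) (m n : nat) (A : 'M[F]_(m, n)) (d lam : nat).
Implicit Types V : {set 'I_n}.
Local Notation q := #|F|.
Hypothesis d_gt1 : 1 < d.
Hypothesis wt_min : forall v, v \in codewords A -> v != 0%R -> d <= wt v.
Hypothesis rank_subcode_off : forall V, #|V| != d -> \rank (subcode A V) = #|V| - d.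
Hypothesis min_supports_through2 : forall U : {set 'I_n}, #|U| = 2 ->
  #|[set V in min_supports A d | U \subset V]| = lam.

Lemma card_codewords_supported_in V :
  #|supported_in (@supp F n) (codewords A) V| =
  q ^ (#|V| - d) + q.-1 * (V \in min_supports A d).
Proof.
have d_gt0 : 0 < d by apply: ltnW.
rewrite -codewords_subcode card_codewords; have [cardV | ] := eqVneq #|V| d.
  rewrite (rank_subcode_min d_gt0 wt_min cardV) cardV subnn.
  case: (V \in _); rewrite ?muln1 ?muln0 ?expn1 //.
  by rewrite add1n prednK // ltnW // card_finNzRing_gt1.
move=> neq_d; rewrite rank_subcode_off //.
case: (boolP (V \in _)) => [/card_min_support/eqP | _]; last by rewrite muln0 addn0.
by rewrite (negbTE neq_d).
Qed.

Lemma is_2design_of_min_supports w : is_2design A w.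
Proof.
have [lam' through_const] : exists lam', forall U : {set 'I_n}, #|U| = 2 ->
    #|[set v in codewords A | (wt v == w) && (U \subset supp v)]| = lam'.
  apply: ex_const_2subsets => U U' U_2 U'_2.
  exact: (card_weight_through2_eq (h := fun s => q ^ (s - d))
    card_codewords_supported_in (@card_min_support _ _ _ A d) d_gt1 min_supports_through2 w U_2 U'_2).
by exists (lam' %/ q.-1) => U U_2; rewrite /blocks_through through_const.
Qed.

End CodeDesigns.

Section NearMDS.
Variables (F : finFieldType) (m n k : nat) (C : 'M[F]_(m, n)).
Hypothesis rankC : \rank C = k.
Hypothesis k_gt1 : 1 < k.
Hypothesis nk_gt1 : 1 < n - k.
Hypothesis wt_min_C : forall v, v \in codewords C -> v != 0%R -> n - k <= wt v.
Hypothesis wt_min_dual :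
  forall v, v \in codewords (dual_code C) -> v != 0%R -> k <= wt v.
Implicit Types U V : {set 'I_n}.

Lemma rank_subcode_nmds V : #|V| != n - k -> \rank (subcode C V) = #|V| - (n - k).
Proof.
case: ltngtP => // [ltV | gtV] _.
  by rewrite (rank_subcode_small wt_min_C ltV); apply/esym/eqP; rewrite subn_eq0 ltnW.
have := rank_subcode_dual C (~: V); rewrite setCK rankC.
rewrite (rank_subcode_small wt_min_dual (V := ~: V)); last first.
  by have := cardsC V; rewrite card_ord; lia.
have := cardsC V; rewrite card_ord.
by move: (\rank _) => r; lia.
Qed.

Lemma rank_dual_subcode_nmds V : #|V| != k -> \rank (subcode (dual_code C) V) = #|V| - k.
Proof.
case: ltngtP => // [ltV | gtV] _.
  by rewrite (rank_subcode_small wt_min_dual ltV); apply/esym/eqP; rewrite subn_eq0 ltnW.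
have := rank_subcode_dual C V; rewrite rankC.
rewrite (rank_subcode_small wt_min_C (V := ~: V)); last first.
  by have := cardsC V; rewrite card_ord; lia.
by move: (\rank _) => r; lia.
Qed.

Lemma min_supports_dual V :
  (V \in min_supports (dual_code C) k) = (~: V \in min_supports C (n - k)).
Proof.
have cardCV : #|~: V| + #|V| = n by rewrite addnC cardsC card_ord.
have [cardV | /eqP neqV] := eqVneq #|V| k.
  have cardCV' : #|~: V| = n - k by lia.
  have := rank_subcode_dual C V; rewrite rankC cardV addnC => /addnI.
  rewrite (rank_subcode_min (ltnW k_gt1) wt_min_dual cardV).
  rewrite (rank_subcode_min (ltnW nk_gt1) wt_min_C cardCV').
  by case: (_ \in _); case: (_ \in _).
apply/idP/idP => /card_min_support; first by move/neqV.
have k_le_n : k <= n by rewrite -rankC rank_leq_col.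
lia.
Qed.

Lemma dual_min_supports_through U :
  #|[set V in min_supports (dual_code C) k | U \subset V]| =
  nblocks_avoiding (min_supports C (n - k)) U.
Proof.
rewrite /nblocks_avoiding -(card_imset _ (@setC_inj _)) (can_imset_pre _ (@setCK _)).
by apply: eq_card => B; rewrite !inE min_supports_dual setCK subsetC.
Qed.

Lemma is_2design_nmds lam :
    (forall U : {set 'I_n}, #|U| = 2 -> blocks_through C (n - k) U = lam) ->
  forall w, is_2design C w /\ is_2design (dual_code C) w.
Proof.
move=> through_C w; have d_gt0 := ltnW nk_gt1.
have min_through_C U : #|U| = 2 ->
    #|[set V in min_supports C (n - k) | U \subset V]| = lam.
  by move=> U_2; rewrite -(blocks_through_min_supports d_gt0 wt_min_C) through_C.
split.
  exact: (is_2design_of_min_supports nk_gt1 wt_min_C rank_subcode_nmds min_through_C w).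
have [lamD min_through_D] : exists lamD, forall U, #|U| = 2 ->
    #|[set V in min_supports (dual_code C) k | U \subset V]| = lamD.
  apply: ex_const_2subsets => U U' U_2 U'_2; rewrite !dual_min_supports_through.
  apply: (nblocks_avoiding_eq (@card_min_support _ _ _ C _) nk_gt1 min_through_C).
    by rewrite U_2 U'_2.
  by rewrite U_2.
exact: is_2design_of_min_supports k_gt1 wt_min_dual rank_dual_subcode_nmds min_through_D w.
Qed.

End NearMDS.

Unset Implicit Arguments.

Theorem mainTheorem1 (F : finFieldType) (m n k : nat) (C : 'M[F]_(m, n)) :
  \rank C = k ->
  NMDS C ->
  (3 <= minn k (n - k))%N ->
  is_2design C (n - k) ->
  forall w : nat, (2 <= w <= n)%N ->
    is_2design C w /\ is_2design (dual_code C) w.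
Proof.
(* The range of [w] is irrelevant: the conclusion holds for every weight. *)
move=> rankC [[_ wt_min_C] [_ wt_min_D]] k_bounds [lam through_C] w _.
have [k_gt1 nk_gt1] : 1 < k /\ 1 < n - k.
  by move: k_bounds; rewrite leq_min => /andP [k3 nk3]; split; apply: ltnW.
have rank_dual : \rank (dual_code C) = n - k by rewrite mxrank_ker mxrank_tr rankC.
have k_le_n : k <= n by rewrite -rankC rank_leq_col.
rewrite rankC in wt_min_C; rewrite rank_dual subKn // in wt_min_D.
exact: (is_2design_nmds rankC k_gt1 nk_gt1 wt_min_C wt_min_D through_C w).
Qed.
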